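(* Let $G$ be a group and $(\rho,V)$ a linear representation of $G$ on a finite-dimensional vector space $V$ over a field $k$. Let $A$ be a nonempty finite subset of $G$ and $Y$ a $k$-subspace of $V$ with $\dim\langle A\cdot Y\rangle\leq\alpha|A|$ for some $\alpha\in\mathbb{R}_{\geq0}$. Then there exists a nonempty subset $B\subset A$ such that $\dim\langle CB\cdot Y\rangle\leq\alpha|CB|$ for every finite subset $C$ of $G$.
   Context: $g\cdot v=\rho(g)v$; for $S\subset G$, $\langle S\cdot Y\rangle$ is the $k$-span of $\{s\cdot v\mid s\in S,v\in Y\}$; $CB=\{cb\mid c\in C,b\in B\}$. *)

From HB Require Import structures.
From mathcomp Require Import all_boot all_order all_algebra.
From mathcomp Require Import finmap.
From mathcomp Require Import reals.
Set Implicit Arguments. Unset Strict Implicit. Unset Printing Implicit Defensive.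
Import Order.TTheory GRing.Theory Num.Theory.
Local Open Scope ring_scope.
Local Open Scope fset_scope.

Definition is_group (G : Type) (mul : G -> G -> G) (one : G) (inv : G -> G) : Prop :=
  [/\ forall x y z, mul x (mul y z) = mul (mul x y) z,
      forall x, mul one x = x,
      forall x, mul x one = x,
      forall x, mul (inv x) x = one &
      forall x, mul x (inv x) = one].

Definition is_representation (G : Type) (mul : G -> G -> G) (one : G)
    (k : fieldType) (V : vectType k) (rho : G -> 'End(V)) : Prop :=
  (forall g h, rho (mul g h) = (rho g \o rho h)%VF) /\ rho one = \1%VF.

Definition span_act (G : choiceType) (k : fieldType) (V : vectType k)
    (rho : G -> 'End(V)) (S : {fset G}) (Y : {vspace V}) : {vspace V} :=
  (\sum_(s <- S) (rho s @: Y))%VS.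

Definition fset_prod (G : choiceType) (mul : G -> G -> G) (C B : {fset G}) : {fset G} :=
  [fset mul c b | c in C, b in B].

From HB Require Import structures.
From mathcomp Require Import all_boot all_order all_algebra.
From mathcomp Require Import finmap.
From mathcomp Require Import reals.
From mathcomp Require Import lra.
Set Implicit Arguments. Unset Strict Implicit. Unset Printing Implicit Defensive.
Import Order.TTheory GRing.Theory Num.Theory.
Local Open Scope ring_scope.
Local Open Scope fset_scope.

(* Choose a nonempty B <= A minimising beta := dim <B.Y> / |B|; then beta <= alpha
   and dim <B'.Y> >= beta |B'| for every B' <= B.  Adding one row cB to a product
   X = CB, the dimension grows by at most dim <cB.Y> - dim <(cB :&: X).Y>
   (submodularity of B |-> dim <B.Y>), while cB :&: X = c B'' with B'' <= B;
   as translation by c preserves both dimensions and cardinalities, the inequality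
   dim <CB.Y> <= beta |CB| is preserved, hence holds for every finite C. *)

Lemma seq_argmin d (O : orderType d) (T : eqType) (F : T -> O) (s : seq T) x0 :
  x0 \in s -> exists2 x, x \in s & forall y, y \in s -> (F x <= F y)%O.
Proof.
case: s => // a s _; elim: s a => [|b s IH] a.
  by exists a => [|y]; rewrite ?mem_head // inE => /eqP->.
have [x xs Fx] := IH b.
have [Fax|Fxa] := leP (F a) (F x).
  exists a => [|y]; rewrite ?mem_head // inE => /predU1P[->//|/Fx].
  exact: le_trans.
exists x => [|y]; first by rewrite inE xs orbT.
by rewrite inE => /predU1P[->|/Fx//]; apply: ltW.
Qed.

Lemma exists_min_density_subset (R : realFieldType) (T : choiceType)
    (f : {fset T} -> nat) (A : {fset T}) :
  A != fset0 ->
  exists B, exists beta : R,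
    [/\ B != fset0, B `<=` A, (f B)%:R <= beta * #|` B|%:R,
        beta * #|` A|%:R <= (f A)%:R &
        forall B', B' `<=` B -> beta * #|` B'|%:R <= (f B')%:R].
Proof.
move=> A_n0; pose density S : R := (f S)%:R / #|` S|%:R.
have card_gt0 S : S != fset0 -> 0 < #|` S|%:R :> R by rewrite ltr0n cardfs_gt0.
pose nonempty_subsets := [seq S <- fpowerset A | S != fset0].
have mem_subsets S : (S \in nonempty_subsets) = (S != fset0) && (S `<=` A).
  by rewrite mem_filter fpowersetE.
have [|B] := seq_argmin density (x0 := A) (s := nonempty_subsets).
  by rewrite mem_subsets A_n0 fsubset_refl.
rewrite mem_subsets => /andP[B_n0 BA] B_min.
have le_density S : S != fset0 -> S `<=` A -> density B * #|` S|%:R <= (f S)%:R.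
  by move=> S_n0 SA; rewrite -ler_pdivlMr ?card_gt0 ?B_min ?mem_subsets ?S_n0.
exists B, (density B); split=> //; first by rewrite divfK ?lt0r_neq0 ?card_gt0.
  exact: le_density.
move=> B' B'B; have [->|B'_n0] := eqVneq B' fset0; first by rewrite cardfs0 mulr0.
exact/le_density/(fsubset_trans B'B).
Qed.

Local Notation lmul mul c S := [fset mul c b | b in S].

Section FsetProd.
Variables (G : choiceType) (mul : G -> G -> G).

Lemma fset_prod0 (B : {fset G}) : fset_prod mul fset0 B = fset0.
Proof. by apply/fsetP => x; rewrite inE; apply/imfset2P => -[c]. Qed.

Lemma fset_prod1U (c : G) (C B : {fset G}) :
  fset_prod mul (c |` C) B = lmul mul c B `|` fset_prod mul C B.
Proof.
apply/fsetP => x; apply/imfset2P/fsetUP.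
  move=> [c' /fset1UP[->|c'C] [b bB ->]].
    by left; apply/imfsetP; exists b.
  by right; apply/imfset2P; exists c' => //; exists b.
case=> [/imfsetP[b bB ->]|/imfset2P[c' c'C [b bB ->]]].
  by exists c; [exact: fset1U1 | exists b].
by exists c'; [apply/fset1UP; right | exists b].
Qed.

Lemma fsetI_lmul (c : G) (B X : {fset G}) :
  lmul mul c B `&` X = lmul mul c [fset b in B | mul c b \in X].
Proof.
apply/fsetP => x; rewrite in_fsetI; apply/andP/imfsetP.
  by move=> [/imfsetP[b bB ->] cbX]; exists b; rewrite // !inE bB cbX.
move=> [b]; rewrite !inE => /andP[bB cbX] ->; split=> //.
by apply/imfsetP; exists b.
Qed.

End FsetProd.

Section SpanAct.
Variables (G : choiceType) (k : fieldType) (V : vectType k).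
Variables (rho : G -> 'End(V)) (Y : {vspace V}).

Local Notation span S := (span_act rho S Y).

Lemma span_act_subv (S : {fset G}) (W : {vspace V}) :
  (forall s, s \in S -> (rho s @: Y <= W)%VS) -> (span S <= W)%VS.
Proof.
move=> sub_W; rewrite /span_act big_seq.
apply: (big_ind (fun U => U <= W)%VS) => [|U U' UW U'W|//].
  exact: sub0v.
by rewrite subv_add UW.
Qed.

Lemma limg_sub_span_act (S : {fset G}) s : s \in S -> (rho s @: Y <= span S)%VS.
Proof. by move=> sS; rewrite /span_act (big_rem s) //= addvSl. Qed.

Lemma span_act0 : span fset0 = 0%VS.
Proof. by apply/eqP; rewrite -subv0; apply: span_act_subv => s; rewrite inE. Qed.

Lemma span_actS (S T : {fset G}) : S `<=` T -> (span S <= span T)%VS.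
Proof.
by move=> /fsubsetP ST; apply: span_act_subv => s /ST; exact: limg_sub_span_act.
Qed.

Lemma span_actU (S T : {fset G}) : span (S `|` T) = (span S + span T)%VS.
Proof.
apply/eqP; rewrite eqEsubv subv_add !span_actS ?fsubsetUl ?fsubsetUr ?andbT //.
apply: span_act_subv => s /fsetUP[] sS.
  by apply: subv_trans (addvSl _ _); exact: limg_sub_span_act.
by apply: subv_trans (addvSr _ _); exact: limg_sub_span_act.
Qed.

Lemma dim_span_act_submod (S T : {fset G}) :
  (\dim (span (S `|` T)) + \dim (span (S `&` T)) <= \dim (span S) + \dim (span T))%N.
Proof.
rewrite span_actU -(dimv_sum_cap (span S)) leq_add2l dimvS // subv_cap.
by rewrite !span_actS ?fsubsetIl ?fsubsetIr.
Qed.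

Section Translation.
Variables (mul : G -> G -> G) (one : G) (inv : G -> G).
Hypotheses (mulG : is_group mul one inv) (rhoG : is_representation mul one rho).

Lemma lmul_inj (c : G) : injective (mul c).
Proof.
have [mulA mul1g _ mulVg _] := mulG.
by move=> x y cx_cy; rewrite -[x]mul1g -(mulVg c) -mulA cx_cy mulA mulVg mul1g.
Qed.

Lemma card_lmul (c : G) (S : {fset G}) : #|` lmul mul c S| = #|` S|.
Proof. exact/card_imfset/lmul_inj. Qed.

Lemma span_act_lmul (c : G) (S : {fset G}) :
  span (lmul mul c S) = (rho c @: span S)%VS.
Proof.
have [rhoM _] := rhoG.
rewrite /span_act big_imfset /=; last by move=> x y _ _; apply: lmul_inj.
by rewrite limg_sum; apply: eq_bigr => s _; rewrite rhoM limg_comp.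
Qed.

Lemma dim_span_act_lmul (c : G) (S : {fset G}) :
  \dim (span (lmul mul c S)) = \dim (span S).
Proof.
have [_ _ _ mulVg _] := mulG; have [rhoM rho1] := rhoG.
have rhoK : cancel (rho c) (rho (inv c)).
  by move=> v; rewrite -comp_lfunE -rhoM mulVg rho1 id_lfunE.
rewrite span_act_lmul limg_dim_eq //.
by have /lker0P/eqP-> := can_inj rhoK; rewrite capv0.
Qed.

Lemma dim_span_act_prod_le (R : realFieldType) (beta : R) (B : {fset G}) :
  (\dim (span B))%:R <= beta * #|` B|%:R ->
  (forall B', B' `<=` B -> beta * #|` B'|%:R <= (\dim (span B'))%:R) ->
  forall C, (\dim (span (fset_prod mul C B)))%:R
              <= beta * #|` fset_prod mul C B|%:R.
Proof.
move=> le_B ge_subB; elim/fset1U_rect => [|c C _ IH].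
  by rewrite fset_prod0 span_act0 dimv0 cardfs0 mulr0.
rewrite fset_prod1U; set X := fset_prod mul C B; set Z := lmul mul c B.
have le_Z : (\dim (span Z))%:R <= beta * #|` Z|%:R.
  by rewrite dim_span_act_lmul card_lmul.
have ge_ZX : beta * #|` Z `&` X|%:R <= (\dim (span (Z `&` X)))%:R.
  rewrite fsetI_lmul dim_span_act_lmul card_lmul; apply: ge_subB.
  by apply/fsubsetP => b; rewrite inE => /andP[].
have submod := dim_span_act_submod Z X.
rewrite -(ler_nat R) !natrD in submod.
have /(congr1 (fun n => n%:R : R)) := cardfsUI Z X; rewrite !natrD => card_ZX.
have -> : #|` Z `|` X|%:R = #|` Z|%:R + #|` X|%:R - #|` Z `&` X|%:R :> R.
  by rewrite -card_ZX addrK.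
lra.
Qed.

End Translation.
End SpanAct.

Theorem mainTheorem13 (G : choiceType) (mul : G -> G -> G) (one : G) (inv : G -> G)
    (k : fieldType) (V : vectType k) (rho : G -> 'End(V)) (R : realType) (alpha : R)
    (A : {fset G}) (Y : {vspace V}) :
  is_group mul one inv ->
  is_representation mul one rho ->
  A != fset0 ->
  0 <= alpha ->
  (\dim (span_act rho A Y))%:R <= alpha * (#|` A|)%:R ->
  exists B : {fset G},
    [/\ B != fset0, (B `<=` A)%fset &
        forall C : {fset G},
          (\dim (span_act rho (fset_prod mul C B) Y))%:R
            <= alpha * (#|` fset_prod mul C B|)%:R].
Proof.
move=> mulG rhoG A_n0 _ le_A.
have [B [beta [B_n0 BA le_B ge_A ge_subB]]] :=
  exists_min_density_subset R (fun S => \dim (span_act rho S Y)) A_n0.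
have beta_le_alpha : beta <= alpha.
  by rewrite -(ler_pM2r (_ : 0 < #|` A|%:R)) ?ltr0n ?cardfs_gt0 // (le_trans ge_A).
exists B; split=> // C.
apply: le_trans (dim_span_act_prod_le mulG rhoG le_B ge_subB C) _.
by rewrite ler_wpM2r.
Qed.
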